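(* Let $S=\operatorname{Sys}(A,B,C)$ be a $(U,X,Y)$-relation with $A$ bounded (so $C:X\to Y$ is bounded), and suppose $\|e^{At}\|\le ae^{-\alpha t}$ for all $t\ge0$, for some $a\ge1$ and $\alpha\in\mathbb{R}$. Then for all $\beta<\alpha$ the $\beta$-IS-$(0,1)$-gain $h(\beta)$ and the $\beta$-IO-$(0,1)$-gain $g(\beta)$ of $S$ satisfy $$h(\beta)\le\max\left(\frac{a\|B\|}{\alpha-\beta},\ \frac{a\|B\|\|A\|}{\alpha-\beta}+\|B\|\right),\qquad g(\beta)\le\max\left(\frac{a\|B\|\|C\|}{\alpha-\beta},\ \frac{a\|B\|\|A\|\|C\|}{\alpha-\beta}+\|B\|\|C\|\right).$$
   Context: A $(U,X,Y)$-relation is a subset of $C^0(\mathbb{R}_{\ge 0},U)\times C^0(\mathbb{R}_{\ge 0},X)\times C^0(\mathbb{R}_{\ge 0},Y)$. For $A$ generating a strongly continuous semigroup on $X$, bounded $B:U\to X$ and $C:\operatorname{Dom}(A)\to Y$ bounded in the graph norm, $\operatorname{Sys}(A,B,C)$ is the relation of all $(u,x,y)$ with $u\in C^0(\mathbb{R}_{\ge0},U)$, $x\in C^0(\mathbb{R}_{\ge0},\operatorname{Dom}(A))\cap C^1(\mathbb{R}_{\ge0},X)$, $y\in C^0(\mathbb{R}_{\ge0},Y)$, $\dot x=Ax+Bu$, $y=Cx$. Gains: fix $\beta\in\mathbb{R}$, $n,m\in\mathbb{Z}_{\ge0}$. Provided every $(u,x,y)\in S$ with $u\in C^n$ has $y\in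 C^m$, the $\beta$-IO-$(n,m)$-gain of $S$ is the infimum of all $\alpha\ge0$ for which there is a function $b:S\to\mathbb{R}_{\ge0}$ with $\|e^{\beta t}\partial_t^k y(t)\|\le\alpha\max_{0\le j\le n}\|e^{\beta s}\partial_s^j u(s)\|_{L^\infty([0,t],U)}+b(u,x,y)$ for all $k\in\{0,\dots,m\}$, $t\ge0$, and $(u,x,y)\in S$ with $u\in C^n$. The $\beta$-IS-$(n,m)$-gain is defined the same way with $\partial_t^k x(t)$ in place of $\partial_t^k y(t)$. *)

From HB Require Import structures.
From mathcomp Require Import all_boot all_order all_algebra.
From mathcomp Require Import all_classical all_reals all_analysis.
Set Implicit Arguments. Unset Strict Implicit. Unset Printing Implicit Defensive.
Import Order.TTheory GRing.Theory Num.Theory.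
Import numFieldNormedType.Exports.
Local Open Scope classical_set_scope.
Local Open Scope ring_scope.

Section Defs.
Variable R : realType.

Definition opnorm (V W : normedModType R) (f : V -> W) : R :=
  inf [set M : R | 0 <= M /\ forall x, `|f x| <= M * `|x|].

Definition expop (X : completeNormedModType R) (A : X -> X) (t : R) (x : X) : X :=
  limn (series (fun k => (t ^+ k / k`!%:R) *: iter k A x)).

Definition has_deriv_nonneg (V : normedModType R) (f : R -> V) (t : R) (d : V) : Prop :=
  (fun h : R => h^-1 *: (f (t + h) - f t))
    @ within (fun h : R => h != 0 /\ 0 <= t + h) (nbhs (0 : R)) --> d.

Definition is_Ck (V : normedModType R) (k : nat) (f : R -> V) (ds : nat -> R -> V) : Prop :=
  [/\ (forall t, 0 <= t -> ds 0%N t = f t),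
      (forall j, (j <= k)%N -> {within `[(0:R), +oo[, continuous (ds j)}) &
      (forall j, (j < k)%N -> forall t, 0 <= t -> has_deriv_nonneg (ds j) t (ds j.+1 t))].

Definition Ck (V : normedModType R) (k : nat) (f : R -> V) : Prop :=
  exists ds, is_Ck k f ds.

(* functions on R_{>=0} are represented by functions R -> V (values on t<0 irrelevant) *)
Definition relation (U X Y : normedModType R) := set ((R -> U) * (R -> X) * (R -> Y)).

Definition Sys (U : normedModType R) (X : completeNormedModType R) (Y : normedModType R)
  (A : X -> X) (B : U -> X) (C : X -> Y) : relation U X Y :=
  [set s | let: (u, x, y) := s in
    [/\ {within `[(0:R), +oo[, continuous u},
        {within `[(0:R), +oo[, continuous x},
        {within `[(0:R), +oo[, continuous (A \o x)},
        {within `[(0:R), +oo[, continuous y} &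
        exists dx : R -> X,
          [/\ {within `[(0:R), +oo[, continuous dx},
              (forall t, 0 <= t -> has_deriv_nonneg x t (dx t)),
              (forall t, 0 <= t -> dx t = A (x t) + B (u t)) &
              (forall t, 0 <= t -> y t = C (x t))]]].

(* max_{0<=j<=n} || e^{beta s} d^j u(s) ||_{L^infty([0,t])}  (u continuous, so sup) *)
Definition Linf_max (U : normedModType R) (n : nat) (du : nat -> R -> U) (beta t : R) : R :=
  \big[Num.max/0]_(j < n.+1)
     sup [set `|expR (beta * s) *: du j s| | s in `[(0:R), t]].

Definition gain (U X Y W : normedModType R)
  (pick : (R -> U) * (R -> X) * (R -> Y) -> R -> W)
  (beta : R) (n m : nat) (S : relation U X Y) : \bar R :=
  if `[< forall s, S s -> Ck n s.1.1 -> Ck m (pick s) >] then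
    ereal_inf [set alpha%:E | alpha in
      [set alpha : R | 0 <= alpha /\
        exists b : (R -> U) * (R -> X) * (R -> Y) -> R,
          (forall s, S s -> 0 <= b s) /\
          forall s, S s -> forall du, is_Ck n s.1.1 du ->
            forall dw, is_Ck m (pick s) dw ->
            forall k, (k <= m)%N -> forall t, 0 <= t ->
              `|expR (beta * t) *: dw k t| <= alpha * Linf_max n du beta t + b s]]
  else +oo%E.

Definition IO_gain (U X Y : normedModType R) beta n m (S : relation U X Y) :=
  gain (fun s => s.2) beta n m S.
Definition IS_gain (U X Y : normedModType R) beta n m (S : relation U X Y) :=
  gain (fun s => s.1.2) beta n m S.

End Defs.

(* Variation of constants without integrals.  Along a trajectory of x' = A x + B u
   and for T >= 0, the function w r := e^((T - r) A) x r has derivative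
   e^((T - r) A) B u r on [0, T], of norm at most a |B| K e^(-alpha (T - r) - beta r)
   when e^(beta r) |u r| <= K on [0, T].  A mean value inequality, proved by real
   induction so that no Banach-valued integral is needed, compares w with a primitive
   of this bound and gives e^(beta T) |x T| <= a |x 0| + a |B| K / (alpha - beta).
   The bound on x' follows from x' = A x + B u, and the output bounds from y = C x;
   the terms in |x 0| are absorbed by the trajectory-dependent offset allowed in the
   definition of the gains. *)

From HB Require Import structures.
From mathcomp Require Import all_boot all_order all_algebra.
From mathcomp Require Import all_classical all_reals all_analysis.
From mathcomp Require Import ring lra.
Set Implicit Arguments. Unset Strict Implicit. Unset Printing Implicit Defensive.
Import Order.TTheory GRing.Theory Num.Theory.
Import numFieldNormedType.Exports.
Local Open Scope classical_set_scope.
Local Open Scope ring_scope.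

Lemma series_exp_coeff_dominated (R : realType) (X : completeNormedModType R)
    (u : X ^nat) (K s : R) :
  (forall k, `|u k| <= K * exp_coeff s k) ->
  cvgn (series u) /\ `|limn (series u)| <= K * expR s.
Proof.
move=> hu.
have hc : series (K *: exp_coeff s) @ \oo --> K * expR s.
  by rewrite seriesZ; apply: cvgZr; exact: is_cvg_series_exp_coeff.
have cn : cvgn [normed series u].
  apply: (series_le_cvg _ _ hu (cvgP _ hc)) => k //; exact: le_trans (hu k).
split; first exact: normed_cvg.
apply: le_trans (lim_series_norm cn) _; rewrite -(cvg_lim _ hc) //.
exact: lim_series_le cn (cvgP _ hc) hu.
Qed.

Section PowTaylorRemainder.
Variable R : realDomainType.

Definition taylor_rem_pow (t e : R) k := (t + e) ^+ k - t ^+ k - k%:R * e * t ^+ k.-1.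

Lemma taylor_rem_powSS t e k :
  taylor_rem_pow t e k.+2 = (t + e) * taylor_rem_pow t e k.+1 + k.+1%:R * e ^+ 2 * t ^+ k.
Proof. rewrite /taylor_rem_pow /= !exprS; ring. Qed.

Lemma norm_taylor_rem_pow_le t e k : `|e| <= 1 ->
  `|taylor_rem_pow t e k| <= e ^+ 2 * (2 * (`|t| + 1)) ^+ k.
Proof.
move=> e_le1; set P := `|t| + 1.
have P_ge1 : 1 <= P by rewrite lerDr.
have P_ge0 : 0 <= P := le_trans ler01 P_ge1.
have bound_ge0 n : 0 <= e ^+ 2 * (2 * P) ^+ n by rewrite mulr_ge0 ?sqr_ge0 ?exprn_ge0 ?mulr_ge0.
elim: k => [|[|k] IH].
- by rewrite (_ : taylor_rem_pow t e 0 = 0) ?normr0 // /taylor_rem_pow /=; ring.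
- by rewrite (_ : taylor_rem_pow t e 1 = 0) ?normr0 // /taylor_rem_pow /=; ring.
rewrite taylor_rem_powSS; apply: le_trans (ler_normD _ _) _.
have norm_tDe : `|t + e| <= P by apply: le_trans (ler_normD _ _) _; rewrite lerD2l.
have k_le : (k.+1%:R : R) <= 2 ^+ k.+1.
  by rewrite -natrX ler_nat ltnW // ltn_expl.
have Pk_le : `|t| ^+ k <= P ^+ k.+2.
  apply: le_trans (_ : P ^+ k <= _); first by rewrite lerXn2r ?nnegrE // lerDl.
  by apply: ler_weXn2l; rewrite ?leqW.
rewrite !normrM normrX normr_nat -[`|e| * `|e|]expr2 real_normK ?num_real //.
have -> : e ^+ 2 * (2 * P) ^+ k.+2
    = P * (e ^+ 2 * (2 * P) ^+ k.+1) + e ^+ 2 * (2 ^+ k.+1 * P ^+ k.+2).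
  by rewrite !exprMn !exprS; ring.
apply: lerD; first exact: ler_pM.
rewrite [_ * e ^+ 2]mulrC -mulrA ler_wpM2l ?sqr_ge0 //.
by apply: ler_pM.
Qed.

End PowTaylorRemainder.

Section OperatorExponential.
Variables (R : realType) (X : completeNormedModType R) (A : {linear X -> X}) (L : R).
Hypotheses (L_ge0 : 0 <= L) (normA_le : forall z, `|A z| <= L * `|z|).

Local Notation E := (expop A).

Definition expop_term t z k : X := (t ^+ k / k`!%:R) *: iter k A z.

Lemma norm_iter_le k z : `|iter k A z| <= L ^+ k * `|z|.
Proof.
elim: k => [|k IH] /=; first by rewrite expr0 mul1r.
by rewrite exprS -mulrA; apply: le_trans (normA_le _) _; exact: ler_wpM2l.
Qed.

Lemma series_iter_dominated (c : R ^nat) (K s : R) z :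
  (forall k, `|c k| <= K * (s ^+ k / k`!%:R)) ->
  cvgn (series (fun k => c k *: iter k A z)) /\
  `|limn (series (fun k => c k *: iter k A z))| <= K * `|z| * expR (s * L).
Proof.
move=> hc; apply: series_exp_coeff_dominated => k.
have -> : K * `|z| * exp_coeff (s * L) k = K * (s ^+ k / k`!%:R) * (L ^+ k * `|z|).
  by rewrite /exp_coeff /= exprMn; ring.
by rewrite normrZ; apply: ler_pM; rewrite ?norm_iter_le.
Qed.

Let expop_coeff_le (t : R) k : `|t ^+ k / k`!%:R| <= 1 * (`|t| ^+ k / k`!%:R).
Proof. by rewrite mul1r normrM normfV normrX normr_nat. Qed.

Lemma expop_cvg t z : series (expop_term t z) @ \oo --> E t z.
Proof. by case: (series_iter_dominated z (expop_coeff_le t)). Qed.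

Lemma norm_expop_le t z : `|E t z| <= expR (`|t| * L) * `|z|.
Proof.
by case: (series_iter_dominated z (expop_coeff_le t)) => _; rewrite mul1r mulrC.
Qed.

Lemma expop_lim t z l : series (expop_term t z) @ \oo --> l -> E t z = l.
Proof. exact: cvg_lim. Qed.

Lemma iterB k p q : iter k A (p - q) = iter k A p - iter k A q.
Proof. by elim: k => [|k IH] //=; rewrite IH linearB. Qed.

Lemma iterZ k c p : iter k A (c *: p) = c *: iter k A p.
Proof. by elim: k => [|k IH] //=; rewrite IH linearZ. Qed.

Lemma expopB t p q : E t (p - q) = E t p - E t q.
Proof.
apply: expop_lim; have -> : expop_term t (p - q) = expop_term t p - expop_term t q.
  by apply/funext => k; rewrite /expop_term /= iterB scalerBr.
by rewrite seriesD seriesN; apply: cvgB; exact: expop_cvg.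
Qed.

Lemma expopZ t c p : E t (c *: p) = c *: E t p.
Proof.
apply: expop_lim.
have -> : series (expop_term t (c *: p)) = (fun n => c *: series (expop_term t p) n).
  apply/funext => n; rewrite /series /= scaler_sumr; apply: eq_bigr => k _.
  by rewrite /expop_term iterZ !scalerA mulrC.
by apply: cvgZr; exact: expop_cvg.
Qed.

Lemma expop0 z : E 0 z = z.
Proof.
apply: expop_lim; rewrite -cvg_shiftS.
have -> : [sequence series (expop_term 0 z) n.+1]_n = cst z.
  apply/funext => n /=; rewrite /series /= big_nat_recl //= big1 ?addr0.
    by rewrite /expop_term expr0 mul1r invr1 scale1r.
  by move=> i _; rewrite /expop_term expr0n mul0r scale0r.
exact: cvg_cst.
Qed.

Lemma expop_deriv_series_cvg t z :
  series (fun k => (k%:R * t ^+ k.-1 / k`!%:R) *: iter k A z) @ \oo --> E t (A z).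
Proof.
rewrite -cvg_shiftS.
have -> : [sequence series (fun k => (k%:R * t ^+ k.-1 / k`!%:R) *: iter k A z) n.+1]_n
          = series (expop_term t (A z)).
  apply/funext => n /=; rewrite /series /= big_nat_recl //= !mul0r scale0r add0r.
  apply: eq_bigr => i _; rewrite /expop_term -iterSr factS natrM /=.
  by rewrite -mulf_div divff ?mul1r // pnatr_eq0.
exact: expop_cvg.
Qed.

Lemma norm_expop_taylor_le t e z : `|e| <= 1 ->
  `|E (t + e) z - E t z - e *: E t (A z)| <= e ^+ 2 * `|z| * expR (2 * (`|t| + 1) * L).
Proof.
move=> e_le1; pose c k := taylor_rem_pow t e k / k`!%:R.
have c_le k : `|c k| <= e ^+ 2 * ((2 * (`|t| + 1)) ^+ k / k`!%:R).
  rewrite normrM normfV normr_nat mulrA ler_pM2r ?invr_gt0 ?ltr0n ?fact_gt0 //.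
  exact: norm_taylor_rem_pow_le.
have [_] := series_iter_dominated z c_le.
suff -> : limn (series (fun k => c k *: iter k A z))
          = E (t + e) z - E t z - e *: E t (A z) by [].
apply: cvg_lim => //.
have -> : series (fun k => c k *: iter k A z) = fun n =>
    series (expop_term (t + e) z) n - series (expop_term t z) n
    - e *: series (fun k => (k%:R * t ^+ k.-1 / k`!%:R) *: iter k A z) n.
  apply/funext => n; rewrite /series /= scaler_sumr -!sumrB; apply: eq_bigr => k _.
  have -> : c k = (t + e) ^+ k / k`!%:R - t ^+ k / k`!%:R - e * (k%:R * t ^+ k.-1 / k`!%:R).
    by rewrite /c /taylor_rem_pow; ring.
  by rewrite /expop_term !scalerBl scalerA.
apply: cvgB; first by apply: cvgB; exact: expop_cvg.
by apply: cvgZr; exact: expop_deriv_series_cvg.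
Qed.

End OperatorExponential.

Section OperatorNorm.
Variables (R : realType) (V W : normedModType R).

Lemma continuous_linear_bounded_by (f : {linear V -> W}) : continuous f ->
  exists2 M, 0 <= M & forall x, `|f x| <= M * `|x|.
Proof.
move=> /linear_bounded_continuous/linear_boundedP [M [Mreal HM]].
exists (`|M| + 1) => //; apply: HM.
by rewrite (le_lt_trans (real_ler_norm Mreal)) // ltrDl.
Qed.

Lemma opnorm_bound (f : V -> W) M : 0 <= M -> (forall x, `|f x| <= M * `|x|) ->
  0 <= opnorm f /\ forall x, `|f x| <= opnorm f * `|x|.
Proof.
move=> M_ge0 hM.
have ne : [set M : R | 0 <= M /\ forall x, `|f x| <= M * `|x|] !=set0 by exists M.
split; first by apply: lb_le_inf => // y [].
move=> x; have [x0|x0] := eqVneq `|x| 0; first by move: (hM x); rewrite x0 !mulr0.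
have xpos : 0 < `|x| by rewrite lt_neqAle eq_sym x0 normr_ge0.
rewrite -ler_pdivrMr //; apply: lb_le_inf => // y [_ hy].
by rewrite ler_pdivrMr.
Qed.

Lemma opnorm_le_bound (f : V -> W) M c : 0 <= M -> (forall x, `|f x| <= M * `|x|) ->
  opnorm f <= c -> forall x, `|f x| <= c * `|x|.
Proof.
move=> M_ge0 hM hc x; have [_ hf] := opnorm_bound M_ge0 hM.
by apply: le_trans (hf x) _; apply: ler_wpM2r.
Qed.

Lemma continuous_linear_opnorm (f : {linear V -> W}) : continuous f ->
  0 <= opnorm f /\ forall x, `|f x| <= opnorm f * `|x|.
Proof. by move=> /continuous_linear_bounded_by [M M_ge0 hM]; exact: opnorm_bound hM. Qed.

End OperatorNorm.

Section DerivativeOnNonneg.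
Variables (R : realType) (V : normedModType R).
Implicit Types (f g : R -> V) (t : R) (d : V).

Definition has_deriv_nonneg_eps f t d := forall eps, 0 < eps -> exists2 del, 0 < del &
  forall h, h != 0 -> `|h| < del -> 0 <= t + h ->
    `|f (t + h) - f t - h *: d| <= eps * `|h|.

Let diff_quotient_dist f t d h : h != 0 ->
  `|f (t + h) - f t - h *: d| = `|h| * `|d - h^-1 *: (f (t + h) - f t)|.
Proof.
by move=> h0; rewrite -normrZ scalerBr scalerA divff // scale1r distrC.
Qed.

Lemma has_deriv_nonnegP f t d : has_deriv_nonneg f t d <-> has_deriv_nonneg_eps f t d.
Proof.
split=> [/cvgrPdist_le hf eps eps0 | hf].
  have /nbhs_ballP [del del0 hdel] := hf eps eps0.
  exists del => // h h0 hd th; rewrite diff_quotient_dist // mulrC ler_wpM2r //.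
  by apply: hdel (conj h0 th); rewrite /ball /= sub0r normrN.
apply/cvgrPdist_lt => eps eps0.
have [del del0 hdel] := hf (eps / 2) (divr_gt0 eps0 (ltr0Sn _ 1)).
apply/nbhs_ballP; exists del => // h hb [h0 th].
have hd : `|h| < del by move: hb; rewrite /ball /= sub0r normrN.
move: (hdel h h0 hd th); rewrite diff_quotient_dist // mulrC ler_pM2r ?normr_gt0 //.
by move/le_lt_trans; apply; rewrite ltr_pdivrMr // ltr_pMr // ltr1n.
Qed.

Lemma has_deriv_nonneg_unique f t d1 d2 : 0 <= t ->
  has_deriv_nonneg f t d1 -> has_deriv_nonneg f t d2 -> d1 = d2.
Proof.
move=> t0 /has_deriv_nonnegP H1 /has_deriv_nonnegP H2; apply/eqP; rewrite -subr_eq0 -normr_le0.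
apply/ler_addgt0Pr => e e0; rewrite add0r.
have [del1 del1_gt0 K1] := H1 (e / 2) (divr_gt0 e0 (ltr0Sn _ 1)).
have [del2 del2_gt0 K2] := H2 (e / 2) (divr_gt0 e0 (ltr0Sn _ 1)).
pose h := Num.min del1 del2 / 2.
have h_gt0 : 0 < h by rewrite divr_gt0 // lt_min del1_gt0 del2_gt0.
have h_lt : h < Num.min del1 del2 by rewrite ltr_pdivrMr ?ltr_pMr ?ltr1n // lt_min del1_gt0 del2_gt0.
have [h_lt1 h_lt2] : `|h| < del1 /\ `|h| < del2.
  by apply/andP; rewrite gtr0_norm // -lt_min.
have th : 0 <= t + h by rewrite addr_ge0 // ltW.
have h0 : h != 0 := lt0r_neq0 h_gt0.
have : `|h *: (d1 - d2)| <= e * `|h|.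
  rewrite (_ : h *: _ = (f (t + h) - f t - h *: d2) - (f (t + h) - f t - h *: d1)); last first.
    by rewrite scalerBr opprB [RHS]addrC addrA subrK.
  apply: le_trans (ler_normB _ _) _; rewrite [e]splitr mulrDl addrC.
  by apply: lerD; [exact: K1 | exact: K2].
by rewrite normrZ mulrC ler_pM2r ?normr_gt0.
Qed.

Lemma has_deriv_nonneg_eq f g t d : 0 <= t -> (forall r, 0 <= r -> f r = g r) ->
  has_deriv_nonneg f t d -> has_deriv_nonneg g t d.
Proof.
move=> t0 fg /has_deriv_nonnegP hf; apply/has_deriv_nonnegP => eps eps0.
have [del del0 hdel] := hf eps eps0; exists del => // h h0 hd th.
by rewrite -!fg //; exact: hdel.
Qed.

End DerivativeOnNonneg.

Lemma has_deriv_nonneg_linear (R : realType) (V W : normedModType R) (C : {linear V -> W})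
    (f : R -> V) (g : R -> W) t d : continuous C -> 0 <= t ->
  (forall r, 0 <= r -> g r = C (f r)) -> has_deriv_nonneg f t d -> has_deriv_nonneg g t (C d).
Proof.
move=> cC t0 gCf hf; apply: (has_deriv_nonneg_eq (f := C \o f)) => // [r r0|]; first by rewrite gCf.
rewrite /has_deriv_nonneg.
have -> : (fun h => h^-1 *: ((C \o f) (t + h) - (C \o f) t))
          = C \o (fun h => h^-1 *: (f (t + h) - f t)).
  by apply/funext => h /=; rewrite -linearB -linearZ.
exact: continuous_cvg (cC d) hf.
Qed.

Lemma real_induction (R : realType) (P : R -> Prop) (a b : R) : a <= b ->
  (forall c, a <= c -> c <= b -> (forall r, a <= r -> r < c -> P r) -> P c) ->
  (forall c, a <= c -> c < b -> (forall r, a <= r -> r <= c -> P r) ->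
     exists2 d, 0 < d & forall r, c < r -> r < c + d -> P r) ->
  forall r, a <= r -> r <= b -> P r.
Proof.
move=> ab closed open.
pose S := [set s | a <= s <= b /\ forall r, a <= r -> r <= s -> P r].
have Sa : S a.
  split=> [|r ar ra]; first by rewrite lexx ab.
  have -> : r = a by apply/eqP; rewrite eq_le ra ar.
  by apply: closed => // r' ar' /(le_lt_trans ar'); rewrite ltxx.
have S_ne : S !=set0 by exists a.
have S_ub : ubound S b by move=> s [/andP[]].
have hS : has_sup S by split=> //; exists b.
set c := sup S.
have ac : a <= c := sup_upper_bound hS Sa.
have cb : c <= b := ge_sup S_ne S_ub.
have below r : a <= r -> r < c -> P r.
  by move=> ar /(sup_gt S_ne) [s [_ Ps] rs]; exact: Ps (ltW rs).
have upto_c r : a <= r -> r <= c -> P r.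
  move=> ar; rewrite le_eqVlt => /predU1P [->|]; last exact: below.
  exact: closed.
suff cb' : b <= c by move=> r ar rb; apply: upto_c (le_trans rb cb').
rewrite leNgt; apply/negP => cb'.
have [d d_gt0 Pd] := open c ac cb' upto_c.
pose c' := Num.min (c + d / 2) b.
have cc' : c < c' by rewrite lt_min cb' ltrDl divr_gt0.
suff : S c' by move/(sup_upper_bound hS); rewrite leNgt cc'.
split=> [|r ar rc']; first by rewrite ge_min lexx orbT (le_trans ac (ltW cc')).
have [rc|cr] := leP r c; first exact: upto_c.
apply: Pd => //; apply: le_lt_trans rc' _; rewrite gt_min ltrD2l.
by rewrite ltr_pdivrMr // ltr_pMr // ltr1n.
Qed.

Section MeanValueInequality.
Variables (R : realType) (X : normedModType R) (w v : R -> X) (phi : R -> R) (T : R).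
Hypothesis dw : forall s, 0 <= s -> s <= T -> has_deriv_nonneg_eps w s (v s).
Hypothesis dphi : forall s h, 0 <= s -> s <= T -> 0 < h -> `|v s| * h <= phi (s + h) - phi s.

Let phi_le r c : 0 <= r -> r < c -> c <= T -> phi r <= phi c.
Proof.
move=> r0 rc cT; rewrite -subr_ge0.
have := @dphi r (c - r) r0 (le_trans (ltW rc) cT).
rewrite subr_gt0 subrKC => /(_ rc); apply: le_trans.
by rewrite mulr_ge0 // subr_ge0 ltW.
Qed.

Let bound_left_closed eps c : 0 <= eps -> 0 <= c -> c <= T ->
  (forall r, 0 <= r -> r < c -> `|w r - w 0| <= phi r - phi 0 + eps * r) ->
  `|w c - w 0| <= phi c - phi 0 + eps * c.
Proof.
move=> eps0 c0 cT below; have [->|c_neq0] := eqVneq c 0.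
  by rewrite !subrr normr0 mulr0 addr0.
apply/ler_addgt0Pr => eta eta0.
have c_gt0 : 0 < c by rewrite lt_neqAle eq_sym c_neq0.
have [del del0 hdel] := dw c0 cT ltr01.
have vc1 : 0 < `|v c| + 1 by rewrite ltr_wpDl.
pose m := Num.min (del / 2) (Num.min c (eta / (`|v c| + 1))).
have m_gt0 : 0 < m by rewrite !lt_min !divr_gt0 // c_gt0.
have m_lt : `|- m| < del.
  by rewrite normrN gtr0_norm // gt_min ltr_pdivrMr // ltr_pMr // ltr1n.
have m_le_eta : m * (`|v c| + 1) <= eta by rewrite -ler_pdivlMr // !ge_min lexx !orbT.
have cm0 : 0 <= c - m by rewrite subr_ge0 !ge_min lexx !orbT.
have cmc : c - m < c by rewrite ltrBlDr ltrDl.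
have w_near : `|w c - w (c - m)| <= eta.
  have := hdel (- m) _ m_lt cm0; rewrite oppr_eq0 (lt0r_neq0 m_gt0) => /(_ isT).
  rewrite normrN gtr0_norm // mul1r scaleNr opprK => hm.
  apply: le_trans m_le_eta.
  have -> : w c - w (c - m) = m *: v c - (w (c - m) - w c + m *: v c).
    by rewrite opprD addrCA subrr addr0 opprB.
  apply: le_trans (ler_normB _ _) _.
  by rewrite normrZ gtr0_norm // mulrDr mulr1 lerD2l.
have := below (c - m) cm0 cmc; have := phi_le cm0 cmc cT.
have : `|w c - w 0| <= `|w c - w (c - m)| + `|w (c - m) - w 0|.
  by rewrite -[w c - w 0](subrKA (w (c - m))) ler_normD.
have : eps * (c - m) <= eps * c by rewrite ler_wpM2l // ltW.
lra.
Qed.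

Let bound_right_step eps c : 0 < eps -> 0 <= c -> c < T ->
  `|w c - w 0| <= phi c - phi 0 + eps * c ->
  exists2 d, 0 < d & forall r, c < r -> r < c + d ->
    `|w r - w 0| <= phi r - phi 0 + eps * r.
Proof.
move=> eps0 c0 cT wc_le; have [del del0 hdel] := dw c0 (ltW cT) eps0.
exists del => // r cr rcd; have h_gt0 : 0 < r - c by rewrite subr_gt0.
have := hdel (r - c) (lt0r_neq0 h_gt0).
rewrite gtr0_norm // ltrBlDl rcd subrKC => /(_ isT (le_trans c0 (ltW cr))) hr.
have := dphi c0 (ltW cT) h_gt0; rewrite subrKC.
have : `|w r - w 0| <= `|w r - w c - (r - c) *: v c| + `|(r - c) *: v c| + `|w c - w 0|.
  rewrite -[w r - w 0](subrKA (w c)) -{1}[w r - w c](subrK ((r - c) *: v c)).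
  by apply: le_trans (ler_normD _ _) _; rewrite lerD2r ler_normD.
rewrite normrZ gtr0_norm // [_ * `|v c|]mulrC; lra.
Qed.

Lemma norm_sub_le_of_deriv : 0 <= T -> `|w T - w 0| <= phi T - phi 0.
Proof.
move=> T0; apply/ler_addgt0Pr => e e0.
have T1 : 0 < T + 1 by rewrite ltr_wpDl.
pose eps := e / (T + 1); have eps0 : 0 < eps by rewrite divr_gt0.
have epsT : eps * T <= e by rewrite mulrAC ler_pdivrMr // ler_pM2l // lerDl.
suff : `|w T - w 0| <= phi T - phi 0 + eps * T by move/le_trans; apply; rewrite lerD2l.
apply: (@real_induction _ (fun r => `|w r - w 0| <= phi r - phi 0 + eps * r) 0 T T0 _ _ T T0 (lexx T)).
- by move=> c; apply: bound_left_closed; exact: ltW.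
- by move=> c c0 cT upto_c; exact: bound_right_step eps0 c0 cT (upto_c c c0 (lexx c)).
Qed.

End MeanValueInequality.

Section VariationOfConstants.
Variables (R : realType) (X : completeNormedModType R) (A : {linear X -> X}) (L : R).
Hypotheses (L_ge0 : 0 <= L) (normA_le : forall z, `|A z| <= L * `|z|).

Local Notation E := (expop A).

Lemma norm_expopB_le t e z : `|e| <= 1 ->
  `|E (t + e) z - E t z| <= `|e| * (`|E t (A z)| + `|z| * expR (2 * (`|t| + 1) * L)).
Proof.
move=> e_le1; rewrite -[E (t + e) z - E t z](subrK (e *: E t (A z))).
apply: le_trans (ler_normD _ _) _.
apply: le_trans (lerD (norm_expop_taylor_le L_ge0 normA_le t z e_le1) (lexx _)) _.
rewrite normrZ [X in _ <= X]mulrDr [X in _ <= X]addrC lerD2r -real_normK ?num_real // expr2.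
by rewrite -!mulrA ler_wpM2l // ler_piMl // mulr_ge0 ?expR_ge0.
Qed.

Lemma norm_expop_product_rem_le tau h (p q d : X) : `|h| <= 1 ->
  `|E (tau - h) q - E tau p - h *: E tau (d - A p)|
    <= `|h| * (`|h| * (`|p| * expR (2 * (`|tau| + 1) * L) + `|E tau (A d)|
                        + `|d| * expR (2 * (`|tau| + 1) * L)))
       + expR ((`|tau| + 1) * L) * `|q - p - h *: d|.
Proof.
move=> h_le1; set C1 := expR (2 * (`|tau| + 1) * L).
have Nh_le1 : `|- h| <= 1 by rewrite normrN.
set a1 := E (tau - h) p - E tau p - - h *: E tau (A p).
set b1 := E (tau - h) d - E tau d.
set c1 := E (tau - h) (q - p - h *: d).
have -> : E (tau - h) q - E tau p - h *: E tau (d - A p) = a1 + c1 + h *: b1.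
  rewrite /a1 /b1 /c1 !(expopB L_ge0 normA_le) (expopZ L_ge0 normA_le).
  move: (E (tau - h) q) (E (tau - h) p) (E (tau - h) d) => Q P D.
  move: (E tau p) (E tau d) (E tau (A p)) => P0 D0 AP0.
  rewrite scaleNr opprK !scalerBr opprB addrA -[RHS]addrA subrKA [RHS]addrA.
  by rewrite [P - P0 + _ + _]addrAC [P - P0 + _]addrC subrKA.
have a1_le : `|a1| <= `|h| * (`|h| * (`|p| * C1)).
  apply: le_trans (norm_expop_taylor_le L_ge0 normA_le _ _ Nh_le1) _.
  by rewrite sqrrN -real_normK ?num_real // expr2 !mulrA.
have b1_le : `|b1| <= `|h| * (`|E tau (A d)| + `|d| * C1).
  by have := norm_expopB_le tau d Nh_le1; rewrite normrN.
have c1_le : `|c1| <= expR ((`|tau| + 1) * L) * `|q - p - h *: d|.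
  apply: le_trans (norm_expop_le L_ge0 normA_le _ _) _; apply: ler_wpM2r => //.
  rewrite ler_expR ler_wpM2r //; apply: le_trans (ler_normD _ _) _.
  by rewrite lerD2l normrN.
clearbody a1 b1 c1; apply: le_trans (ler_normD _ _) _.
apply: le_trans (lerD (ler_normD _ _) (lexx _)) _.
rewrite normrZ addrAC; apply: lerD c1_le.
have -> : `|p| * C1 + `|E tau (A d)| + `|d| * C1 = `|p| * C1 + (`|E tau (A d)| + `|d| * C1).
  by rewrite addrA.
by rewrite 2!mulrDr; apply: lerD => //; apply: ler_wpM2l.
Qed.

Lemma has_deriv_nonneg_eps_expop_comp (x : R -> X) (T s : R) (dx : X) :
  has_deriv_nonneg_eps x s dx ->
  has_deriv_nonneg_eps (fun r => E (T - r) (x r)) s (E (T - s) (dx - A (x s))).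
Proof.
move=> hx eps eps0; set tau := T - s.
set M := `|x s| * expR (2 * (`|tau| + 1) * L) + `|E tau (A dx)|
         + `|dx| * expR (2 * (`|tau| + 1) * L).
set C2 := expR ((`|tau| + 1) * L).
have C2_gt0 : 0 < C2 by rewrite expR_gt0.
have M_ge0 : 0 <= M by rewrite !addr_ge0 // mulr_ge0 ?expR_ge0.
have M1_gt0 : 0 < M + 1 by rewrite ltr_wpDl.
have [del0 del0_gt0 hdel0] := hx (eps / (2 * C2)) (divr_gt0 eps0 (mulr_gt0 (ltr0Sn _ 1) C2_gt0)).
exists (Num.min 1 (Num.min del0 (eps / (2 * (M + 1))))).
  by rewrite !lt_min ltr01 del0_gt0 divr_gt0 // mulr_gt0.
move=> h h0; rewrite !lt_min => /and3P [h_lt1 h_lt_del0 h_lt_M] sh /=.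
rewrite (_ : T - (s + h) = tau - h) ?opprD ?addrA //.
apply: le_trans (norm_expop_product_rem_le _ _ _ _ (ltW h_lt1)) _; rewrite -/M -/C2.
have hM : `|h| * M <= eps / 2.
  have -> : eps / 2 = eps / (2 * (M + 1)) * (M + 1) by field; rewrite gt_eqF.
  by apply: ler_pM => //; [exact: ltW | rewrite lerDl].
have hx_le : C2 * `|x (s + h) - x s - h *: dx| <= eps / 2 * `|h|.
  have -> : eps / 2 * `|h| = C2 * (eps / (2 * C2) * `|h|) by field; rewrite gt_eqF.
  by apply: ler_wpM2l; [exact: ltW | exact: hdel0].
rewrite [eps]splitr mulrDl; apply: lerD hx_le.
by rewrite [X in _ <= X]mulrC; apply: ler_wpM2l.
Qed.

End VariationOfConstants.

Lemma expR_increment_ge (R : realType) (q r : R) : r * expR q <= expR (q + r) - expR q.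
Proof.
rewrite expRD -[X in _ - X]mulr1 -mulrBr mulrC ler_wpM2l ?expR_ge0 //.
by rewrite lerBrDl expR_ge1Dx.
Qed.

Section ExponentialStability.
Variables (R : realType) (X : completeNormedModType R) (U : normedModType R).
Variables (A : {linear X -> X}) (B : {linear U -> X}) (L nB a alpha beta : R).
Hypotheses (L_ge0 : 0 <= L) (normA_le : forall z, `|A z| <= L * `|z|).
Hypotheses (nB_ge0 : 0 <= nB) (normB_le : forall v, `|B v| <= nB * `|v|).
Hypotheses (a_ge0 : 0 <= a) (beta_lt_alpha : beta < alpha).
Hypothesis norm_expop_stable :
  forall t z, 0 <= t -> `|expop A t z| <= a * expR (- (alpha * t)) * `|z|.

Lemma norm_state_sub_expop_le (x dx : R -> X) (u : R -> U) (T K : R) : 0 <= T ->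
  (forall t, 0 <= t -> has_deriv_nonneg x t (dx t)) ->
  (forall t, 0 <= t -> dx t = A (x t) + B (u t)) ->
  (forall s, 0 <= s -> s <= T -> expR (beta * s) * `|u s| <= K) ->
  `|x T - expop A T (x 0)|
    <= a * nB * K / (alpha - beta) * (expR (- (beta * T)) - expR (- (alpha * T))).
Proof.
move=> T0 hx hdx hu; set g := alpha - beta.
have g_gt0 : 0 < g by rewrite subr_gt0.
have K_ge0 : 0 <= K by apply: le_trans (hu 0 (lexx 0) T0); rewrite mulr_ge0 ?expR_ge0.
set c := a * nB * K / g.
(* a primitive of the bound c * g * e^(g s - alpha T) on the norm of the derivative of w *)
pose phi s := c * expR (g * s - alpha * T).
have -> : c * (expR (- (beta * T)) - expR (- (alpha * T))) = phi T - phi 0.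
  by rewrite /phi mulr0 sub0r -mulrBr (_ : g * T - alpha * T = - (beta * T)) // /g; ring.
have := @norm_sub_le_of_deriv _ _ (fun r => expop A (T - r) (x r))
  (fun r => expop A (T - r) (B (u r))) phi T.
rewrite /= subrr expop0 subr0; apply=> //.
  move=> s s0 _; have -> : B (u s) = dx s - A (x s) by rewrite hdx // [A _ + _]addrC addrK.
  by apply: (has_deriv_nonneg_eps_expop_comp L_ge0 normA_le); apply/has_deriv_nonnegP/hx.
move=> s h s0 sT h_gt0 /=; apply: le_trans (_ : c * g * expR (g * s - alpha * T) * h <= _).
  apply: ler_wpM2r; first exact: ltW.
  have u_le : `|u s| <= K * expR (- (beta * s)).
    by rewrite expRN ler_pdivlMr ?expR_gt0 // mulrC; exact: hu.
  have Ts_ge0 : 0 <= T - s by rewrite subr_ge0.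
  apply: le_trans (norm_expop_stable (B (u s)) Ts_ge0) _.
  have -> : c * g * expR (g * s - alpha * T)
            = a * expR (- (alpha * (T - s))) * (nB * (K * expR (- (beta * s)))).
    have -> : g * s - alpha * T = - (alpha * (T - s)) + - (beta * s) by rewrite /g; ring.
    by rewrite expRD /c; field; rewrite gt_eqF.
  rewrite ler_wpM2l ?mulr_ge0 ?expR_ge0 //.
  by apply: le_trans (normB_le _) _; rewrite ler_wpM2l.
rewrite /phi (_ : g * (s + h) - alpha * T = (g * s - alpha * T) + g * h); last by ring.
rewrite -mulrBr -2!mulrA; apply: ler_wpM2l; first by rewrite divr_ge0 ?mulr_ge0 // ltW.
by rewrite mulrCA mulrC; exact: expR_increment_ge.
Qed.

Lemma weighted_norm_state_le (x dx : R -> X) (u : R -> U) (T K : R) : 0 <= T ->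
  (forall t, 0 <= t -> has_deriv_nonneg x t (dx t)) ->
  (forall t, 0 <= t -> dx t = A (x t) + B (u t)) ->
  (forall s, 0 <= s -> s <= T -> expR (beta * s) * `|u s| <= K) ->
  expR (beta * T) * `|x T| <= a * `|x 0| + a * nB * K / (alpha - beta).
Proof.
move=> T0 hx hdx hu; have duhamel := norm_state_sub_expop_le T0 hx hdx hu.
have K_ge0 : 0 <= K by apply: le_trans (hu 0 (lexx 0) T0); rewrite mulr_ge0 ?expR_ge0.
set c := a * nB * K / (alpha - beta) in duhamel *.
have c_ge0 : 0 <= c by rewrite divr_ge0 ?mulr_ge0 // subr_ge0 ltW.
set p := expR (beta * T); set q := expR (- (alpha * T)) in duhamel *.
have p_gt0 : 0 < p by rewrite expR_gt0.
have pq_le1 : p * q <= 1.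
  rewrite /p /q -expRD (_ : beta * T + - (alpha * T) = - ((alpha - beta) * T)); last by ring.
  by rewrite expR_le1 oppr_le0 mulr_ge0 // subr_ge0 ltW.
have xT_le : `|x T| <= a * q * `|x 0| + c * (p^-1 - q).
  rewrite -[x T](subrK (expop A T (x 0))) -expRN; apply: le_trans (ler_normD _ _) _.
  by rewrite [X in X <= _]addrC; apply: lerD => //; exact: norm_expop_stable.
apply: le_trans (ler_wpM2l (ltW p_gt0) xT_le) _.
have -> : p * (a * q * `|x 0| + c * (p^-1 - q)) = a * (p * q) * `|x 0| + c - c * (p * q).
  by field; rewrite gt_eqF.
have : a * (p * q) * `|x 0| <= a * `|x 0| by rewrite -mulrA ler_wpM2l // ler_piMl.
have : 0 <= c * (p * q) by rewrite mulr_ge0 // mulr_ge0 ?expR_ge0 // ltW.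
lra.
Qed.

End ExponentialStability.

Section WeightedSupremum.
Variables (R : realType) (U : normedModType R).

Lemma le_sup_weighted_norm (f : R -> U) (beta t s : R) :
  {within `[(0:R), +oo[, continuous f} -> 0 <= s -> s <= t ->
  expR (beta * s) * `|f s| <= sup [set `|expR (beta * r) *: f r| | r in `[(0:R), t]].
Proof.
move=> cf s0 st; have t0 := le_trans s0 st.
have cnf : {within `[(0:R), t], continuous (fun r => `|f r|)}.
  apply: (@within_continuous_comp _ _ _ _ f (fun z => `|z|)) => [y _|].
    exact: norm_continuous.
  apply: continuous_subspaceW cf => r /=; rewrite !in_itv /= => /andP [r0 _].
  by rewrite r0.
have [c _ f_le_c] := EVT_max t0 cnf.
apply: sup_upper_bound; last first.
  by exists s; [rewrite /= in_itv /= s0 st | rewrite normrZ ger0_norm ?expR_ge0].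
split; first by exists `|expR (beta * 0) *: f 0|, 0 => //; rewrite /= in_itv /= lexx t0.
exists (expR (`|beta| * t) * `|f c|) => _ [r /= r_in <-].
move: (r_in); rewrite in_itv /= => /andP [r0 rt].
rewrite normrZ ger0_norm ?expR_ge0 //; apply: ler_pM; rewrite ?expR_ge0 //; last exact: f_le_c.
rewrite ler_expR; apply: le_trans (ler_norm _) _.
by rewrite normrM [`|r|]ger0_norm //; apply: ler_wpM2l.
Qed.

Lemma Linf_max_ge0 n (du : nat -> R -> U) beta t : 0 <= Linf_max n du beta t.
Proof. by rewrite /Linf_max; elim/big_rec: _ => // i x _ x0; rewrite le_max x0 orbT. Qed.

Lemma Linf_max_ge n (du : nat -> R -> U) beta t j s : (j <= n)%N ->
  {within `[(0:R), +oo[, continuous (du j)} -> 0 <= s -> s <= t ->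
  expR (beta * s) * `|du j s| <= Linf_max n du beta t.
Proof.
move=> jn cdu s0 st; apply: le_trans (le_sup_weighted_norm beta cdu s0 st) _.
by rewrite /Linf_max (bigD1 (Ordinal (jn : (j < n.+1)%N))) //= le_max lexx.
Qed.

End WeightedSupremum.

Section FirstOrderSmoothness.
Variables (R : realType) (V : normedModType R).

Lemma Ck1_intro (f df : R -> V) :
  {within `[(0:R), +oo[, continuous f} -> {within `[(0:R), +oo[, continuous df} ->
  (forall t, 0 <= t -> has_deriv_nonneg f t (df t)) -> Ck 1 f.
Proof.
move=> cf cdf hf; exists (fun j => if j is 0%N then f else df).
by split=> // [[|[|j]]|[|j]].
Qed.

Lemma is_Ck1_eval (f : R -> V) dw t d : is_Ck 1 f dw -> 0 <= t ->
  has_deriv_nonneg f t d -> forall k, (k <= 1)%N -> dw k t = f t \/ dw k t = d.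
Proof.
move=> [dw0 _ dwS] t0 hf [_|[_|//]]; first by left; exact: dw0.
have hdw1 := has_deriv_nonneg_eq t0 dw0 (dwS 0%N isT t t0).
by right; exact: has_deriv_nonneg_unique t0 hdw1 hf.
Qed.

End FirstOrderSmoothness.

Lemma gain_le (R : realType) (U X Y W : normedModType R)
    (pick : (R -> U) * (R -> X) * (R -> Y) -> R -> W) beta n m (S : relation U X Y)
    (c : R) (b : (R -> U) * (R -> X) * (R -> Y) -> R) :
  0 <= c -> (forall s, S s -> 0 <= b s) ->
  (forall s, S s -> Ck n s.1.1 -> Ck m (pick s)) ->
  (forall s, S s -> forall du, is_Ck n s.1.1 du -> forall dw, is_Ck m (pick s) dw ->
     forall k, (k <= m)%N -> forall t, 0 <= t ->
       `|expR (beta * t) *: dw k t| <= c * Linf_max n du beta t + b s) ->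
  (gain pick beta n m S <= c%:E)%E.
Proof.
move=> c_ge0 b_ge0 smooth bound; rewrite /gain; case: asboolP => // _.
by apply: ereal_inf_lbound; exists c => //; split=> //; exists b.
Qed.

Section SysGains.
Variables (R : realType) (U : normedModType R) (X : completeNormedModType R).
Variables (Y : normedModType R) (A : {linear X -> X}) (B : {linear U -> X}).
Variables (C : {linear X -> Y}) (nA nB nC a alpha beta : R).
Hypotheses (nA_ge0 : 0 <= nA) (normA_le : forall z, `|A z| <= nA * `|z|).
Hypotheses (nB_ge0 : 0 <= nB) (normB_le : forall v, `|B v| <= nB * `|v|).
Hypotheses (cC : continuous C) (nC_ge0 : 0 <= nC) (normC_le : forall z, `|C z| <= nC * `|z|).
Hypotheses (a_ge0 : 0 <= a) (beta_lt_alpha : beta < alpha).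
Hypothesis norm_expop_stable :
  forall t z, 0 <= t -> `|expop A t z| <= a * expR (- (alpha * t)) * `|z|.

Local Notation M := (Num.max (a * nB / (alpha - beta)) (a * nB * nA / (alpha - beta) + nB)).

Lemma weighted_norm_state_deriv_le (x dx : R -> X) (u : R -> U) du t :
  (forall t, 0 <= t -> has_deriv_nonneg x t (dx t)) ->
  (forall t, 0 <= t -> dx t = A (x t) + B (u t)) ->
  is_Ck 0 u du -> 0 <= t ->
  expR (beta * t) * `|x t| <= M * Linf_max 0 du beta t + a * `|x 0| * (1 + nA) /\
  expR (beta * t) * `|dx t| <= M * Linf_max 0 du beta t + a * `|x 0| * (1 + nA).
Proof.
move=> hx hdx [du0 cdu _] t0; set K := Linf_max 0 du beta t.
have u_le s : 0 <= s -> s <= t -> expR (beta * s) * `|u s| <= K.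
  by move=> s0 st; rewrite -du0 //; exact: Linf_max_ge (cdu 0%N isT) s0 st.
have K_ge0 : 0 <= K := Linf_max_ge0 _ _ _ _.
have x_le := weighted_norm_state_le nA_ge0 normA_le nB_ge0 normB_le a_ge0 beta_lt_alpha
  norm_expop_stable t0 hx hdx u_le.
have dx_le : expR (beta * t) * `|dx t|
             <= nA * (a * `|x 0| + a * nB * K / (alpha - beta)) + nB * K.
  rewrite hdx //; apply: le_trans (_ : expR (beta * t) * (nA * `|x t| + nB * `|u t|) <= _).
    by rewrite ler_wpM2l ?expR_ge0 // (le_trans (ler_normD _ _)) // lerD.
  rewrite mulrDr mulrCA [_ * (nB * _)]mulrCA.
  by apply: lerD; apply: ler_wpM2l => //; exact: u_le.
have M1_le : a * nB / (alpha - beta) * K <= M * K by rewrite ler_wpM2r // le_max lexx.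
have M2_le : (a * nB * nA / (alpha - beta) + nB) * K <= M * K.
  by rewrite ler_wpM2r // le_max lexx orbT.
have : 0 <= a * `|x 0| by rewrite mulr_ge0.
have : 0 <= a * `|x 0| * nA by rewrite !mulr_ge0.
split; lra.
Qed.

Let M_ge0 : 0 <= M.
Proof. by rewrite le_max divr_ge0 ?mulr_ge0 // subr_ge0 ltW. Qed.

Let offset_ge0 (s : (R -> U) * (R -> X) * (R -> Y)) : 0 <= a * `|s.1.2 0| * (1 + nA).
Proof. by rewrite !mulr_ge0 // addr_ge0. Qed.

Lemma Sys_IS_gain01_le : (IS_gain beta 0 1 (Sys A B C) <= M%:E)%E.
Proof.
apply: (gain_le (b := fun s => a * `|s.1.2 0| * (1 + nA))) => //.
  by move=> [[u x] y] [_ cx _ _ [dx [cdx hx _ _]]] _ /=; exact: Ck1_intro cx cdx hx.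
move=> [[u x] y] [_ _ _ _ [dx [_ hx hdx _]]] du hdu dw hdw k k_le1 t t0 /=.
have [x_le dx_le] := weighted_norm_state_deriv_le hx hdx hdu t0.
rewrite normrZ ger0_norm ?expR_ge0 //.
by case: (is_Ck1_eval hdw t0 (hx t t0) k_le1) => ->.
Qed.

Lemma Sys_IO_gain01_le : (IO_gain beta 0 1 (Sys A B C) <= (nC * M)%:E)%E.
Proof.
apply: (gain_le (b := fun s => nC * (a * `|s.1.2 0| * (1 + nA)))).
- exact: mulr_ge0.
- by move=> s _; rewrite mulr_ge0.
- move=> [[u x] y] [_ _ _ cy [dx [cdx hx _ hy]]] _ /=.
  apply: Ck1_intro (C \o dx) cy _ _.
    by apply: within_continuous_comp cdx => z _; exact: cC.
  by move=> t t0; exact: has_deriv_nonneg_linear cC t0 hy (hx t t0).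
move=> [[u x] y] [_ _ _ _ [dx [_ hx hdx hy]]] du hdu dw hdw k k_le1 t t0 /=.
have [x_le dx_le] := weighted_norm_state_deriv_le hx hdx hdu t0.
have hy' := has_deriv_nonneg_linear cC t0 hy (hx t t0).
have C_le z : expR (beta * t) * `|C z| <= nC * (expR (beta * t) * `|z|).
  by rewrite mulrCA ler_wpM2l ?expR_ge0.
rewrite normrZ ger0_norm ?expR_ge0 // -mulrA -mulrDr.
case: (is_Ck1_eval hdw t0 hy' k_le1) => -> /=; [rewrite hy // |];
  by apply: le_trans (C_le _) _; rewrite ler_wpM2l.
Qed.

End SysGains.

Theorem lemma4p9 (R : realType) (U : normedModType R) (X : completeNormedModType R)
  (Y : normedModType R) (A : {linear X -> X}) (B : {linear U -> X}) (C : {linear X -> Y})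
  (cA : continuous A) (cB : continuous B) (cC : continuous C)
  (a alpha : R) (ha : 1 <= a)
  (hexp : forall t : R, 0 <= t -> opnorm (expop A t) <= a * expR (- (alpha * t)))
  (beta : R) (hba : beta < alpha) :
  (IS_gain beta 0 1 (Sys A B C) <=
     (Num.max (a * opnorm B / (alpha - beta))
              (a * opnorm B * opnorm A / (alpha - beta) + opnorm B))%:E)%E /\
  (IO_gain beta 0 1 (Sys A B C) <=
     (Num.max (a * opnorm B * opnorm C / (alpha - beta))
              (a * opnorm B * opnorm A * opnorm C / (alpha - beta)
                 + opnorm B * opnorm C))%:E)%E.
Proof.
have [nA_ge0 normA_le] := continuous_linear_opnorm cA.
have [nB_ge0 normB_le] := continuous_linear_opnorm cB.
have [nC_ge0 normC_le] := continuous_linear_opnorm cC.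
have a_ge0 : 0 <= a := le_trans ler01 ha.
have stable t z : 0 <= t -> `|expop A t z| <= a * expR (- (alpha * t)) * `|z|.
  move=> t0; exact: opnorm_le_bound (expR_ge0 _) (norm_expop_le nA_ge0 normA_le t) (hexp t t0) z.
split; first exact: Sys_IS_gain01_le.
rewrite (_ : Num.max _ _ = opnorm C * Num.max (a * opnorm B / (alpha - beta))
                                     (a * opnorm B * opnorm A / (alpha - beta) + opnorm B)).
  exact: Sys_IO_gain01_le.
by rewrite maxr_pMr //; congr Num.max; ring.
Qed.
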